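(* Let $G$ be a connected graph with vertices $v_1,\dots,v_n$, and let $k_1,k$ be nonnegative integers. Then \[ \sum_{i=1}^{n} dav(G-v_i,k_1,k,k)=(n-2-k_1-2k)\,dav(G,k_1,k,k)+(k_1+1)\,dav(G,k_1+1,k,k)+(k+1)\,dav(G,k_1,k,k+1). \]
   Context: All graphs are finite, simple and undirected. $G-v$ denotes the graph obtained from $G$ by deleting vertex $v$ and its incident edges. For a graph $F$ and nonnegative integers $k_1,k_2,k_3$, $dav(F,k_1,k_2,k_3)$ denotes the number of pairs of adjacent vertices $x$ and $y$ in $F$ such that exactly $k_1$ vertices are adjacent to both $x$ and $y$, exactly $k_2$ vertices other than $y$ are adjacent to $x$ but not to $y$, and exactly $k_3$ vertices other than $x$ are adjacent to $y$ but not to $x$. *)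

From mathcomp Require Import all_boot all_order all_algebra.
Set Implicit Arguments. Unset Strict Implicit. Unset Printing Implicit Defensive.

(* A finite simple graph: vertex type T : finType, adjacency e : rel T,
   symmetric and irreflexive.  Subgraphs are induced on a vertex set V. *)
Definition simple_graph (T : finType) (e : rel T) : Prop :=
  symmetric e /\ irreflexive e.

Definition connected_graph (T : finType) (e : rel T) : Prop :=
  forall x y : T, connect e x y.

Definition dav_ok (T : finType) (e : rel T) (V : {set T}) (k1 k2 k3 : nat)
  (x y : T) : bool :=
  [&& #|[set z in V | e x z && e y z]| == k1,
      #|[set z in V | (z != y) && e x z && ~~ e y z]| == k2 &
      #|[set z in V | (z != x) && e y z && ~~ e x z]| == k3].

(* dav(F,k1,k2,k3) for F the subgraph of (T,e) induced by V: the number of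
   (unordered) pairs {x,y} of adjacent vertices of F that can be labelled
   x,y so as to satisfy the conditions. *)
Definition dav (T : finType) (e : rel T) (V : {set T}) (k1 k2 k3 : nat) : nat :=
  #|[set E : {set T} | [exists x, exists y,
       [&& E == [set x; y], x \in V, y \in V, e x y & dav_ok e V k1 k2 k3 x y]]]|.

From mathcomp Require Import all_boot all_order all_algebra zify.
Import GRing.Theory Num.Theory.
Local Open Scope ring_scope.

(* Double counting over the deleted vertex.  Fix an edge xy of G with a
   common neighbours and b, c private neighbours of x and of y.  In G - v the
   edge xy disappears if v is x or y; otherwise it has a - 1, b - 1 or c - 1
   in place of a, b or c when v is a common or a private neighbour, and the
   n - 2 - a - b - c remaining choices of v leave it unchanged.  Hence xy
   contributes to both sides alike, according to whether its type in G is
   (k1, k, k), (k1 + 1, k, k) or (k1, k, k + 1) up to swapping x and y. *)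

Lemma big_setU_disjoint (R : Type) (idx : R) (op : Monoid.com_law idx)
    (T : finType) (A B : {set T}) (F : T -> R) :
  [disjoint A & B] ->
  \big[op/idx]_(i in A :|: B) F i =
    op (\big[op/idx]_(i in A) F i) (\big[op/idx]_(i in B) F i).
Proof. by move=> dAB; rewrite -bigU //; apply: eq_bigl => i; rewrite inE. Qed.

Lemma sum_deletion_counts (R : nmodType) (T : finType) (D A B C : {set T})
    (F : nat -> nat -> nat -> R) :
  [disjoint A & B] -> [disjoint A :|: B & C] -> A :|: B :|: C \subset D ->
  \sum_(v in D) F (#|A| - (v \in A))%N (#|B| - (v \in B))%N (#|C| - (v \in C))%N =
    F #|A| #|B| #|C| *+ #|D :\: (A :|: B :|: C)|
  + F #|A|.-1 #|B| #|C| *+ #|A| + F #|A| #|B|.-1 #|C| *+ #|B|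
  + F #|A| #|B| #|C|.-1 *+ #|C|.
Proof.
move=> dAB dABC sUD; set U := A :|: B :|: C.
have dAC : [disjoint A & C] by apply: disjointWl dABC; apply: subsetUl.
have dBC : [disjoint B & C] by apply: disjointWl dABC; apply: subsetUr.
rewrite (big_setID U) /= (setIidPr sUD) !big_setU_disjoint //= addrC !addrA.
congr (_ + _ + _ + _); rewrite -sumr_const; apply: eq_bigr => v.
- rewrite !inE => /andP[/norP[/norP[/negbTE-> /negbTE->] /negbTE->] _].
  by rewrite !subn0.
- by move=> vA; rewrite vA (disjointFr dAB vA) (disjointFr dAC vA) !subn0 subn1.
- by move=> vB; rewrite vB (disjointFl dAB vB) (disjointFr dBC vB) !subn0 subn1.
- by move=> vC; rewrite vC (disjointFl dAC vC) (disjointFl dBC vC) !subn0 subn1.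
Qed.

Lemma deletion_count_identity (n r a b c k1 k : nat) : (r + 2 + a + b + c)%N = n ->
    ((a, b, c) == (k1, k, k) : int) *+ r + ((a.-1, b, c) == (k1, k, k) : int) *+ a
  + ((a, b.-1, c) == (k1, k, k) : int) *+ b + ((a, b, c.-1) == (k1, k, k) : int) *+ c
  = (n%:Z - 2 - k1%:Z - 2 * k%:Z) * ((a, b, c) == (k1, k, k) : int)
  + k1.+1%:Z * ((a, b, c) == (k1.+1, k, k) : int)
  + k.+1%:Z * (((a, b, c) == (k1, k, k.+1)) || ((a, b, c) == (k1, k.+1, k)) : int).
Proof.
move=> <-; rewrite !xpair_eqE -[LHS]addrA; congr (_ + _ + _).
- by case: eqP => [->|]; case: eqP => [->|]; case: eqP => [->|] /=;
    rewrite ?andbF ?mulr0 ?mulr1 //; lia.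
- by case: a => [|a] /=; [rewrite mulr0n mulr0 | case: eqP => [->|] /=; lia].
- case: (a =P k1) => //= _; last by rewrite !mul0rn addr0 mulr0.
  by case: b => [|b]; case: c => [|c] /=; lia.
Qed.

Lemma sep_setD1 (T : finType) (V : {set T}) (p : pred T) (v : T) :
  [set z in V :\ v | p z] = [set z in V | p z] :\ v.
Proof. by apply/setP => z; rewrite !inE andbA. Qed.

Lemma card_setD1 (T : finType) (S : {set T}) (v : T) :
  #|S :\ v| = (#|S| - (v \in S))%N.
Proof. by rewrite (cardsD1 v S) addKn. Qed.

Section InducedSubgraphs.
Variables (T : finType) (e : rel T).
Hypotheses (e_sym : symmetric e) (e_irr : irreflexive e).

Definition common_nbrs (V : {set T}) (x y : T) : {set T} :=
  [set z in V | e x z && e y z].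

Definition private_nbrs (V : {set T}) (x y : T) : {set T} :=
  [set z in V | (z != y) && e x z && ~~ e y z].

Definition nbr_counts (V : {set T}) (x y : T) : nat * nat * nat :=
  (#|common_nbrs V x y|, #|private_nbrs V x y|, #|private_nbrs V y x|).

Lemma dav_okE V k1 k2 k3 x y :
  dav_ok e V k1 k2 k3 x y = (nbr_counts V x y == (k1, k2, k3)).
Proof. by rewrite /dav_ok !xpair_eqE andbA. Qed.

Lemma common_nbrsC V x y : common_nbrs V x y = common_nbrs V y x.
Proof. by apply/setP => z; rewrite !inE (andbC (e x z)). Qed.

Lemma dav_okC V k1 k2 k3 x y : dav_ok e V k1 k2 k3 y x = dav_ok e V k1 k3 k2 x y.
Proof.
by rewrite !dav_okE /nbr_counts common_nbrsC !xpair_eqE -!andbA (andbC (_ == k2)).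
Qed.

Lemma nbr_counts_setD1 V v x y :
  nbr_counts (V :\ v) x y =
  (#|common_nbrs V x y| - (v \in common_nbrs V x y),
   #|private_nbrs V x y| - (v \in private_nbrs V x y),
   #|private_nbrs V y x| - (v \in private_nbrs V y x))%N.
Proof. by rewrite /nbr_counts /common_nbrs /private_nbrs !sep_setD1 !card_setD1. Qed.

Lemma common_private_nbrs_disjoint V x y :
  [disjoint common_nbrs V x y & private_nbrs V x y].
Proof.
by rewrite -setI_eq0; apply/eqP/setP => z; rewrite !inE; case: (e y z); rewrite ?andbF.
Qed.

Lemma private_nbrs_disjoint V x y :
  [disjoint common_nbrs V x y :|: private_nbrs V x y & private_nbrs V y x].
Proof.
by rewrite -setI_eq0; apply/eqP/setP => z; rewrite !inE; case: (e x z); rewrite ?andbF.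
Qed.

Lemma nbrs_subset_setC2 V x y :
  common_nbrs V x y :|: private_nbrs V x y :|: private_nbrs V y x
    \subset ~: [set x; y].
Proof.
apply/subsetP => z; rewrite !inE negb_or.
have [->|_] := eqVneq z x; first by rewrite e_irr !andbF.
by have [->|_] := eqVneq z y; first by rewrite e_irr !andbF.
Qed.

Definition is_dav_pair (V : {set T}) (k1 k2 k3 : nat) (E : {set T}) : bool :=
  [exists x, exists y,
     [&& E == [set x; y], x \in V, y \in V, e x y & dav_ok e V k1 k2 k3 x y]].

Lemma dav_sum V k1 k2 k3 :
  (dav e V k1 k2 k3)%:Z = \sum_(E : {set T}) (is_dav_pair V k1 k2 k3 E : int).
Proof.
rewrite /dav -sum1_card -natz natr_sum big_mkcond /=.
by apply: eq_bigr => E _; rewrite inE -/(is_dav_pair _ _ _ _ _); case: is_dav_pair.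
Qed.

Lemma is_dav_pair_edge V k1 k2 k3 x y : e x y ->
  is_dav_pair V k1 k2 k3 [set x; y] =
  [&& x \in V, y \in V & dav_ok e V k1 k2 k3 x y || dav_ok e V k1 k3 k2 x y].
Proof.
move=> exy; apply/existsP/idP.
  case=> x' /existsP[y' /and5P[/eqP Exy x'V y'V ex'y' ok]].
  have : (x' \in [set x; y]) && (y' \in [set x; y]) by rewrite Exy set21 set22.
  case/andP=> /set2P[] ex /set2P[] ey; subst x' y'; rewrite ?e_irr // in ex'y'.
    by rewrite x'V y'V ok.
  by rewrite dav_okC in ok; rewrite x'V y'V ok orbT.
case/and3P=> xV yV /orP[ok | ok].
  by exists x; apply/existsP; exists y; rewrite eqxx xV yV exy ok.
exists y; apply/existsP; exists x.
by rewrite setUC eqxx xV yV e_sym exy dav_okC ok.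
Qed.

Lemma is_dav_pair_edge_set V k1 k2 k3 E : is_dav_pair V k1 k2 k3 E ->
  [exists x, exists y, (E == [set x; y]) && e x y].
Proof.
case/existsP=> x /existsP[y /and5P[Exy _ _ exy _]].
by apply/existsP; exists x; apply/existsP; exists y; rewrite Exy exy.
Qed.

Lemma sum_is_dav_pair_deleted_edge k1 k x y : e x y ->
  \sum_v (is_dav_pair (setT :\ v) k1 k k [set x; y] : int) =
    (#|T|%:Z - 2 - k1%:Z - 2 * k%:Z) * (is_dav_pair setT k1 k k [set x; y] : int)
  + k1.+1%:Z * (is_dav_pair setT k1.+1 k k [set x; y] : int)
  + k.+1%:Z * (is_dav_pair setT k1 k k.+1 [set x; y] : int).
Proof.
move=> exy; have nxy : x != y by apply: contraTneq exy => ->; rewrite e_irr.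
set A := common_nbrs setT x y; set B := private_nbrs setT x y.
set C := private_nbrs setT y x; set D := ~: [set x; y].
have dAB : [disjoint A & B] := common_private_nbrs_disjoint _ _ _.
have dABC : [disjoint A :|: B & C] := private_nbrs_disjoint _ _ _.
have sUD : A :|: B :|: C \subset D := nbrs_subset_setC2 _ _ _.
have card_rest : (#|D :\: (A :|: B :|: C)| + 2 + #|A| + #|B| + #|C|)%N = #|T|.
  have cardU : #|A :|: B :|: C| = (#|A| + #|B| + #|C|)%N.
    by rewrite !cardsU !disjoint_setI0 // cards0 !subn0.
  have cardD : (#|[set x; y]| + #|D|)%N = #|T| by rewrite cardsC.
  rewrite cards2 nxy in cardD.
  have := subset_leq_card sUD; rewrite cardsDS // cardU; lia.
have deleted v : (is_dav_pair (setT :\ v) k1 k k [set x; y] : int) =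
    if v \in D then
      ((#|A| - (v \in A), #|B| - (v \in B), #|C| - (v \in C))%N == (k1, k, k) : int)
    else 0.
  rewrite is_dav_pair_edge // orbb dav_okE nbr_counts_setD1 !in_setD1 !in_setT !andbT.
  by rewrite in_setC in_set2 negb_or andbA !(eq_sym v); case: ((x != v) && (y != v)).
have full k1' k2 k3 : is_dav_pair setT k1' k2 k3 [set x; y] =
    ((#|A|, #|B|, #|C|) == (k1', k2, k3)) || ((#|A|, #|B|, #|C|) == (k1', k3, k2)).
  by rewrite is_dav_pair_edge // !dav_okE !in_setT.
under eq_bigr => v _ do rewrite deleted.
pose F a b c := ((a, b, c) == (k1, k, k) : int).
rewrite -big_mkcond (sum_deletion_counts _ _ D A B C F) //.
by rewrite !full !orbb; apply: deletion_count_identity.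
Qed.

Lemma sum_is_dav_pair_deleted k1 k E :
  \sum_v (is_dav_pair (setT :\ v) k1 k k E : int) =
    (#|T|%:Z - 2 - k1%:Z - 2 * k%:Z) * (is_dav_pair setT k1 k k E : int)
  + k1.+1%:Z * (is_dav_pair setT k1.+1 k k E : int)
  + k.+1%:Z * (is_dav_pair setT k1 k k.+1 E : int).
Proof.
have [/existsP[x /existsP[y /andP[/eqP-> exy]]] | not_edge] :=
  boolP [exists x, exists y, (E == [set x; y]) && e x y].
  exact: sum_is_dav_pair_deleted_edge.
have no_pair V k1' k2 k3 : is_dav_pair V k1' k2 k3 E = false.
  by apply: contraNF not_edge; apply: is_dav_pair_edge_set.
by rewrite !no_pair big1 ?mulr0 ?addr0 // => v _; rewrite no_pair.
Qed.

End InducedSubgraphs.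

Theorem corollary17 (T : finType) (e : rel T) (k1 k : nat) :
  simple_graph e -> connected_graph e ->
  (\sum_(v : T) (dav e (setT :\ v) k1 k k)%:Z)
  = ((#|T|%:Z - 2 - k1%:Z - 2 * k%:Z) * (dav e setT k1 k k)%:Z
     + (k1.+1)%:Z * (dav e setT k1.+1 k k)%:Z
     + (k.+1)%:Z * (dav e setT k1 k k.+1)%:Z :> int).
Proof.
move=> [e_sym e_irr] _.
under eq_bigr => v _ do rewrite dav_sum.
rewrite exchange_big !dav_sum !mulr_sumr -!big_split /=.
by apply: eq_bigr => E _; rewrite sum_is_dav_pair_deleted.
Qed.
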